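(* Fix an integer $k\ge1$, $q\in(0,1)$ and $\epsilon_\delta>0$, and set $$\delta(k)=\frac{3}{4q}\,\lambda_{\max}^2(AC_kA^T)\frac{\|\bar{\mathbf r}_k\|_2^4}{\big(\mu+\lambda_{\min}(AC_kA^T)\big)^4}+\epsilon_\delta\,k .$$ Define $\zeta_\delta:[1,\infty)\to\mathbb{R}$ by $$\zeta_\delta(\alpha)=1+\frac{\big(\bar{\mathbf r}_k^TM(\alpha)^{-1}\bar{\mathbf r}_k\big)\big(\bar{\mathbf r}_k^TM(\alpha)^{-1}AC_kA^TM(\alpha)^{-1}\bar{\mathbf r}_k\big)}{4\delta(k)},\qquad M(\alpha)=\mu I_m+\alpha AC_kA^T.$$ Then $\zeta_\delta$ maps $[1,\infty)$ into $[1,\infty)$ and satisfies $|\zeta_\delta'(\alpha)|\le q$ for all $\alpha\in[1,\infty)$; consequently the equation $\alpha=\zeta_\delta(\alpha)$ has a unique solution in $[1,\infty)$, and for every $\alpha^0\in[1,\infty)$ the iteration $\alpha^{p+1}=\zeta_\delta(\alpha^p)$ converges to it.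
   Context: Fixed data: $A\in\mathbb{R}^{m\times n}$, $\mathbf d\in\mathbb{R}^m$, $\mu>0$. For an ensemble $\mathbf u_k=(\mathbf u_k^{(1)},\dots,\mathbf u_k^{(N)})$ of vectors in $\mathbb{R}^n$: $\bar{\mathbf u}_k=\frac1N\sum_i\mathbf u_k^{(i)}$, $C_k=\frac1N\sum_i(\mathbf u_k^{(i)}-\bar{\mathbf u}_k)(\mathbf u_k^{(i)}-\bar{\mathbf u}_k)^T$, $\bar{\mathbf r}_k=\mathbf d-A\bar{\mathbf u}_k$. $\lambda_{\max},\lambda_{\min}$ denote the largest and smallest eigenvalues of a symmetric matrix; $\|\cdot\|_2$ is the Euclidean norm. *)

From HB Require Import structures.
From mathcomp Require Import all_boot all_order all_algebra.
From mathcomp Require Import all_classical all_reals all_analysis.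
Set Implicit Arguments. Unset Strict Implicit. Unset Printing Implicit Defensive.
Import Order.TTheory GRing.Theory Num.Theory.
Import numFieldNormedType.Exports.
Local Open Scope ring_scope.

Section EnKF.
Variable R : realType.

Definition ens_mean (N n : nat) (u : 'I_N -> 'cV[R]_n) : 'cV[R]_n :=
  N%:R^-1 *: \sum_(i < N) u i.

Definition ens_cov (N n : nat) (u : 'I_N -> 'cV[R]_n) : 'M[R]_n :=
  N%:R^-1 *: \sum_(i < N) ((u i - ens_mean u) *m (u i - ens_mean u)^T).

Definition ens_resid (N m n : nat) (A : 'M[R]_(m, n)) (d : 'cV[R]_m)
  (u : 'I_N -> 'cV[R]_n) : 'cV[R]_m := d - A *m ens_mean u.

Definition lambda_max (m : nat) (S : 'M[R]_m) : R :=
  sup [set a : R | eigenvalue S a].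
Definition lambda_min (m : nat) (S : 'M[R]_m) : R :=
  inf [set a : R | eigenvalue S a].

Definition norm2 (m : nat) (v : 'cV[R]_m) : R :=
  Num.sqrt (\sum_(i < m) v i 0 ^+ 2).

Definition Mmat (m n : nat) (mu : R) (A : 'M[R]_(m, n)) (C : 'M[R]_n) (alpha : R)
  : 'M[R]_m := mu%:M + alpha *: (A *m C *m A^T).

Definition delta_k (N m n : nat) (A : 'M[R]_(m, n)) (d : 'cV[R]_m) (mu : R)
  (u : 'I_N -> 'cV[R]_n) (k : nat) (q eps : R) : R :=
  let S := A *m ens_cov u *m A^T in
  3 / (4 * q) * lambda_max S ^+ 2 * norm2 (ens_resid A d u) ^+ 4
    / (mu + lambda_min S) ^+ 4 + eps * k%:R.

Definition zeta_delta (N m n : nat) (A : 'M[R]_(m, n)) (d : 'cV[R]_m) (mu : R)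
  (u : 'I_N -> 'cV[R]_n) (k : nat) (q eps : R) (alpha : R) : R :=
  let S := A *m ens_cov u *m A^T in
  let r := ens_resid A d u in
  let Mi := invmx (Mmat mu A (ens_cov u) alpha) in
  1 + (r^T *m Mi *m r) 0 0 * (r^T *m Mi *m S *m Mi *m r) 0 0
      / (4 * delta_k A d mu u k q eps).

End EnKF.

Set Warnings "-notation-overridden,-ambiguous-paths,-notation-incompatible-prefix,-deprecated".
From mathcomp Require Import all_boot all_order all_algebra.
From mathcomp Require Import all_classical all_reals all_analysis.
From mathcomp Require Import complex spectral sesquilinear.
From mathcomp Require Import ring.
Set Implicit Arguments.
Unset Strict Implicit.
Unset Printing Implicit Defensive.
Import Order.TTheory GRing.Theory Num.Theory.
Import numFieldNormedType.Exports.
Local Open Scope ring_scope.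
Local Open Scope classical_set_scope.

(** Diagonalise the symmetric positive semidefinite matrix [S = A C_k A^T]
    as [S = U^-1 diag(d) U].  In the eigenbasis both quadratic forms in
    [zeta_delta] become sums [F_p(a) = \sum_i w_i d_i^p / (mu + a d_i)^(p+1)]
    with [w_i >= 0], [\sum_i w_i = |r_k|^2] and [lambda_min <= d_i <= lambda_max],
    and [F_p' = -(p+1) F_(p+1)].  Hence
    [zeta' = -(F_1^2 + 2 F_0 F_2) / (4 delta)], and for [a >= 1] the bounds
    [F_p(a) <= lambda_max^p |r_k|^2 / (mu + lambda_min)^(p+1)] give
    [|zeta'| <= 3 lambda_max^2 |r_k|^4 / (mu + lambda_min)^4 / (4 delta) <= q].
    By the mean value theorem [zeta] is then a [q]-contraction of the closed
    half-line [[1, +oo)], and Banach's fixed point theorem concludes. *)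

Section HalflineContraction.
Variables (R : realType) (lo q : R) (f : R -> R).
Hypothesis q_lt1 : q < 1.
Hypothesis f_ge : forall x : R, lo <= x -> lo <= f x.
Hypothesis f_deriv : forall x, lo <= x -> derivable f x 1 /\ `|f^`() x| <= q.

Let q_ge0 : 0 <= q.
Proof. by have [_ /(le_trans (normr_ge0 _))] := @f_deriv lo (lexx lo). Qed.

Lemma halfline_lipschitz x y : lo <= x -> lo <= y -> `|f x - f y| <= q * `|x - y|.
Proof.
wlog xy : x y / x <= y => [Hw|] xlo ylo.
  by have [/Hw//|/ltW/Hw] := leP x y; rewrite distrC [`|x - y|]distrC; exact.
have f_is_derive z : z \in `]x, y[%R -> is_derive z 1 f (f^`() z).
  rewrite in_itv /= => /andP[/ltW xz _]; rewrite derive1E.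
  by apply/derivableP; case: (f_deriv (le_trans xlo xz)).
have f_cont : {within `[x, y], continuous f}.
  apply: continuous_in_subspaceT => z; rewrite inE /= in_itv /= => /andP[xz _].
  have [fz _] := f_deriv (le_trans xlo xz).
  exact/differentiable_continuous/derivable1_diffP.
have [c] := MVT_segment xy f_is_derive f_cont.
rewrite in_itv /= => /andP[xc _] fyx.
rewrite distrC fyx distrC normrM ler_wpM2r //.
by case: (f_deriv (le_trans xlo xc)).
Qed.

Let fU := mkfun_fun (f_ge : set_fun [set x | lo <= x] [set x | lo <= x] f).

Let q' : {nonneg R} := NngNum q_ge0.

Let f_contraction : contraction q' fU.
Proof. by split => // -[x y] /= [xlo ylo]; exact: halfline_lipschitz. Qed.

Lemma halfline_fixpoint_exists : exists2 a, lo <= a & a = f a.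
Proof.
by apply: (banach_fixed_point (f := fU)); [exists q' | exact: closed_ge | exists lo => /=].
Qed.

Lemma halfline_fixpoint_unique a b : lo <= a -> a = f a -> lo <= b -> b = f b -> b = a.
Proof.
move=> alo fa blo fb.
by apply: (contraction_fixpoint_unique (f := fU)) => //; exists q'.
Qed.

Lemma halfline_iter_cvg a a0 : lo <= a -> a = f a -> lo <= a0 -> iter n f a0 @[n --> \oo] --> a.
Proof.
move=> alo fa a0lo.
have y_cvg := contraction_cvg f_contraction a0lo.
have iter_lo n : lo <= iter n fU a0 by elim: n => //= n; exact: f_ge.
have lim_lo : lo <= limn (fun n => iter n f a0).
  apply: (@closed_cvg _ _ _ eventually_filter _ [set x : R | lo <= x]).
  - exact: closed_ge.
  - by apply: nearW => n; exact: iter_lo.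
  - exact: y_cvg.
have lim_fix := contraction_cvg_fixed f_contraction a0lo (@closed_ge R lo).
rewrite -(halfline_fixpoint_unique alo fa lim_lo lim_fix).
exact: y_cvg.
Qed.
End HalflineContraction.

Section ResolventSums.
Variables (R : realType) (m : nat) (w d : 'I_m -> R) (mu : R).

Definition resolvent_sum (p : nat) (x : R) : R :=
  \sum_i w i * (d i ^+ p * (mu + x * d i)^-1 ^+ p.+1).

Lemma is_derive_resolvent_sum p x : (forall i, mu + x * d i != 0) ->
  is_derive x 1 (resolvent_sum p) (- p.+1%:R * resolvent_sum p.+1 x).
Proof.
move=> denom_neq0.
have -> : resolvent_sum p = \sum_i (fun y => w i * (d i ^+ p * (mu + y * d i)^-1 ^+ p.+1)).
  by apply/funext => y; rewrite fct_sumE.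
apply: is_derive_eq.
  apply: is_derive_sum => i.
  have denom_derive : is_derive x (1 : R) (fun y => mu + y * d i) (d i).
    apply: is_derive_eq.
    by rewrite add0r mul1r scaler0 add0r /GRing.scale /= mulr1.
  have inv_derive := is_deriveV (f := fun y => mu + y * d i) (denom_neq0 i) denom_derive.
  have := is_deriveZ (w i * d i ^+ p) (is_deriveX p.+1 inv_derive).
  have -> : (fun y => w i * (d i ^+ p * (mu + y * d i)^-1 ^+ p.+1)) =
      (w i * d i ^+ p) \*: (fun y => (mu + y * d i)^-1) ^+ p.+1.
    by apply/funext => y; rewrite /= exprfctE mulrA.
  by move=> h; apply: h.
rewrite /resolvent_sum mulr_sumr; apply: eq_bigr => i _.
rewrite /GRing.scale /= -exprVn; set g := (mu + x * d i)^-1.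
by rewrite !exprS; ring.
Qed.

Lemma is_derive_resolvent_product x : (forall i, mu + x * d i != 0) ->
  is_derive x 1 (fun y => resolvent_sum 0 y * resolvent_sum 1 y)
    (- (resolvent_sum 1 x ^+ 2 + 2 * (resolvent_sum 0 x * resolvent_sum 2 x))).
Proof.
move=> denom_neq0.
have := is_deriveM (is_derive_resolvent_sum 0 denom_neq0) (is_derive_resolvent_sum 1 denom_neq0).
move/is_derive_eq; apply.
by rewrite /GRing.scale /=; ring.
Qed.

Hypotheses (mu_gt0 : 0 < mu) (w_ge0 : forall i, 0 <= w i).
Variables (l L : R).
Hypotheses (l_ge0 : 0 <= l) (l_le_d : forall i, l <= d i) (d_le_L : forall i, d i <= L).
Local Notation W := (\sum_i w i).

Lemma resolvent_denom_gt0 i x : 0 <= x -> 0 < mu + x * d i.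
Proof. by move=> x_ge0; rewrite ltr_pwDl // mulr_ge0 // (le_trans l_ge0). Qed.

Lemma resolvent_sum_ge0 p x : 0 <= x -> 0 <= resolvent_sum p x.
Proof.
move=> x_ge0; apply: sumr_ge0 => i _; apply: mulr_ge0 => //.
apply: mulr_ge0; apply: exprn_ge0; first exact: le_trans l_ge0 (l_le_d i).
by rewrite invr_ge0 ltW ?resolvent_denom_gt0.
Qed.

Lemma resolvent_sum_le p x : 1 <= x ->
  resolvent_sum p x <= L ^+ p * (mu + l)^-1 ^+ p.+1 * W.
Proof.
move=> x_ge1; rewrite mulr_sumr; apply: ler_sum => i _; rewrite mulrC ler_wpM2r //.
have x_ge0 := le_trans ler01 x_ge1.
have d_ge0 := le_trans l_ge0 (l_le_d i).
have denom_gt0 := resolvent_denom_gt0 i x_ge0.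
have denom_ge : mu + l <= mu + x * d i.
  by rewrite lerD2l (le_trans (l_le_d i)) // ler_peMl.
have inv_le : (mu + x * d i)^-1 <= (mu + l)^-1.
  by rewrite lef_pV2 ?posrE // ltr_pwDl.
have inv_ge0 : 0 <= (mu + x * d i)^-1 by rewrite invr_ge0 ltW.
apply: ler_pM; rewrite ?exprn_ge0 //; apply: lerXn2r => //; rewrite nnegrE //.
- exact: le_trans (d_le_L i).
- exact: le_trans inv_le.
Qed.

Lemma resolvent_slope_le x : 1 <= x ->
  resolvent_sum 1 x ^+ 2 + 2 * (resolvent_sum 0 x * resolvent_sum 2 x) <=
  3 * (L ^+ 2 * W ^+ 2 / (mu + l) ^+ 4).
Proof.
move=> x_ge1; have x_ge0 := le_trans ler01 x_ge1.
have W_ge0 : 0 <= W by exact: sumr_ge0.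
have c_ge0 : 0 <= (mu + l)^-1 by rewrite invr_ge0 ltW ?ltr_pwDl.
have -> : 3 * (L ^+ 2 * W ^+ 2 / (mu + l) ^+ 4) = (L * (mu + l)^-1 ^+ 2 * W) ^+ 2 +
    2 * ((mu + l)^-1 * W * (L ^+ 2 * (mu + l)^-1 ^+ 3 * W)).
  by field; rewrite gt_eqF ?ltr_pwDl.
apply: lerD.
  have G_le := resolvent_sum_le 1 x_ge1.
  apply: lerXn2r => //; rewrite nnegrE ?resolvent_sum_ge0 //.
  exact: le_trans (resolvent_sum_ge0 1 x_ge0) G_le.
rewrite ler_wpM2l //; apply: ler_pM; rewrite ?resolvent_sum_ge0 //.
  by have := resolvent_sum_le 0 x_ge1; rewrite expr0 mul1r expr1.
exact: resolvent_sum_le.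
Qed.
End ResolventSums.

Section SymmetricSpectral.
Variables (R : realType) (m : nat) (S : 'M[R]_m).
Local Notation toC := (real_complex R).
Local Notation Sc := (map_mx toC S).
Local Notation U := (spectralmx Sc).
Local Open Scope sesquilinear_scope.

(* The library's spectral theorem lives over an algebraically closed field, so
   [S] is diagonalised through its complexification: [Sc = U^-1 diag(d) U] with
   [U] unitary, [sym_calculus g] is [g(S)] computed over [R[i]], and
   [sym_weight x i = |(U x)_i|^2]. *)
Definition sym_eigval (i : 'I_m) : R := complex.Re (spectral_diag Sc 0 i).

Definition sym_weight (x : 'cV[R]_m) (i : 'I_m) : R :=
  complex.Re (`|(U *m map_mx toC x) i 0| ^+ 2).

Definition sym_calculus (g : R -> R) : 'M[R[i]]_m :=
  invmx U *m diag_mx (\row_i toC (g (sym_eigval i))) *m U.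

Let toC_conj (x : R) : (toC x)^* = toC x.
Proof. by apply: conj_Creal; rewrite complex_real. Qed.

Let U_unit : U \in unitmx := spectral_unit Sc.

Lemma sym_weightE x i : toC (sym_weight x i) = `|(U *m map_mx toC x) i 0| ^+ 2.
Proof. by rewrite /sym_weight RRe_real // rpredX // normr_real. Qed.

Lemma sym_weight_ge0 x i : 0 <= sym_weight x i.
Proof. by rewrite -ler0c sym_weightE exprn_ge0. Qed.

Lemma sym_calculusM g h :
  sym_calculus g *m sym_calculus h = sym_calculus (fun t => g t * h t).
Proof.
rewrite /sym_calculus !mulmxA (mulmxK U_unit) -[_ *m diag_mx _ *m diag_mx _]mulmxA.
congr (_ *m _ *m _); apply/matrixP => i j; rewrite mul_diag_mx !mxE rmorphM.
by case: (i == j); rewrite ?mulr1n ?mulr0n ?mulr0.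
Qed.

Lemma sym_calculus1 : sym_calculus (fun => 1) = 1%:M.
Proof.
rewrite /sym_calculus.
have -> : \row_i toC 1 = const_mx 1 :> 'rV[R[i]]_m by apply/rowP => i; rewrite !mxE rmorph1.
by rewrite diag_const_mx mulmx1 (mulVmx U_unit).
Qed.

Lemma sym_calculusV g : (forall i, g (sym_eigval i) != 0) ->
  invmx (sym_calculus g) = sym_calculus (fun t => (g t)^-1).
Proof.
move=> g_neq0.
have gK : sym_calculus g *m sym_calculus (fun t => (g t)^-1) = 1%:M.
  rewrite sym_calculusM -sym_calculus1; congr (_ *m diag_mx _ *m _).
  by apply/rowP => i; rewrite !mxE mulfV.
have [g_unit _] := mulmx1_unit gK.
by rewrite -[invmx _]mulmx1 -gK mulmxA mulVmx // mul1mx.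
Qed.

Lemma sym_form_calculus (X : 'M[R]_m) g x : map_mx toC X = sym_calculus g ->
  (x^T *m X *m x) 0 0 = \sum_i sym_weight x i * g (sym_eigval i).
Proof.
move=> XE; apply: complexI.
have -> : toC ((x^T *m X *m x) 0 0) = ((map_mx toC x)^T *m sym_calculus g *m map_mx toC x) 0 0.
  by rewrite -XE map_trmx -!map_mxM [in RHS]mxE.
set y := U *m map_mx toC x.
have yT : (map_mx toC x)^T *m invmx U = y^t*.
  rewrite invmx_unitary ?spectral_unitarymx // /y trmx_mul map_mxM; congr (_ *m _).
  by apply/matrixP => i j; rewrite !mxE; exact/esym/toC_conj.
rewrite /sym_calculus !mulmxA yT -mulmxA -/y mul_mx_diag mxE rmorph_sum.
apply: eq_bigr => i _; rewrite rmorphM /= sym_weightE normCK !mxE.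
by rewrite [LHS]mulrC mulrA.
Qed.

Lemma sym_weight_sum x : \sum_i sym_weight x i = \sum_i x i 0 ^+ 2.
Proof.
have := @sym_form_calculus 1%:M (fun=> 1) x; rewrite map_mx1 sym_calculus1 mulmx1 => /(_ erefl).
under [in X in _ = X -> _]eq_bigr do rewrite mulr1.
by move=> <-; rewrite mxE; apply: eq_bigr => i _; rewrite !mxE expr2.
Qed.

Hypothesis symS : S^T = S.

Let Sc_herm : Sc \is hermsymmx.
Proof.
apply/is_hermitianmxP; rewrite expr0 scale1r.
by apply/matrixP => i j; rewrite !mxE toC_conj -[in LHS]symS mxE.
Qed.

Lemma sym_calculus_id : Sc = sym_calculus id.
Proof.
rewrite {1}(orthomx_spectralP (hermitian_normalmx Sc_herm)) /sym_calculus.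
congr (_ *m diag_mx _ *m _); apply/rowP => i; rewrite mxE /sym_eigval RRe_real //.
exact: (mxOverP (hermitian_spectral_diag_real Sc_herm)).
Qed.

Lemma sym_calculus_affine a b :
  map_mx toC (a%:M + b *: S) = sym_calculus (fun t => a + b * t).
Proof.
rewrite map_mxD map_scalar_mx map_mxZ sym_calculus_id /sym_calculus.
rewrite [X in _ = _ *m diag_mx X *m _]
  (_ : _ = const_mx (toC a) + toC b *: \row_i toC (sym_eigval i)).
  rewrite linearD linearZ /= diag_const_mx mulmxDr mulmxDl mul_mx_scalar.
  by rewrite -scalemxAl (mulVmx U_unit) scalemx1 -!scalemxAr -scalemxAl.
by apply/rowP => i; rewrite !mxE rmorphD rmorphM.
Qed.

Lemma sym_eigvalP i : eigenvalue S (sym_eigval i).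
Proof.
rewrite -(eigenvalue_map toC); apply/eigenvalueP; exists (row i U).
  rewrite -row_mul [X in U *m X]sym_calculus_id /sym_calculus !mulmxA (mulmxV U_unit) mul1mx.
  by rewrite mul_diag_mx; apply/rowP => j; rewrite !mxE.
apply/negP => /eqP row0.
have /matrixP /(_ i i) := unitarymxP (spectral_unitarymx Sc).
rewrite !mxE eqxx /= big1; first by move/eqP; rewrite eq_sym oner_eq0.
by move=> k _; move/rowP: row0 => /(_ k); rewrite !mxE => ->; rewrite mul0r.
Qed.

Lemma sym_form x : (x^T *m S *m x) 0 0 = \sum_i sym_weight x i * sym_eigval i.
Proof. exact: sym_form_calculus x sym_calculus_id. Qed.

Section Resolvent.
Variables (mu a : R).
Hypothesis denom_neq0 : forall i, mu + a * sym_eigval i != 0.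
Local Notation M := (mu%:M + a *: S).

Let map_invM : map_mx toC (invmx M) = sym_calculus (fun t => (mu + a * t)^-1).
Proof. by rewrite map_invmx sym_calculus_affine sym_calculusV. Qed.

Lemma sym_form_resolvent x :
  (x^T *m invmx M *m x) 0 0 = resolvent_sum (sym_weight x) sym_eigval mu 0 a.
Proof.
rewrite (sym_form_calculus x map_invM); apply: eq_bigr => i _.
by rewrite expr0 mul1r expr1.
Qed.

Lemma sym_form_resolvent_sandwich x :
  (x^T *m invmx M *m S *m invmx M *m x) 0 0 =
  resolvent_sum (sym_weight x) sym_eigval mu 1 a.
Proof.
have -> : x^T *m invmx M *m S *m invmx M *m x = x^T *m (invmx M *m S *m invmx M) *m x.
  by rewrite !mulmxA.
rewrite (sym_form_calculus (g := fun t => t * (mu + a * t)^-1 ^+ 2) x) //.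
rewrite !map_mxM map_invM sym_calculus_id !sym_calculusM.
by congr sym_calculus; apply/funext => t; rewrite /= expr2 mulrCA mulrA.
Qed.
End Resolvent.
End SymmetricSpectral.

Definition psdmx (R : realFieldType) (m : nat) (S : 'M[R]_m) :=
  forall v : 'rV[R]_m, 0 <= (v *m S *m v^T) 0 0.

Lemma psdmx_conj (R : realFieldType) (m n : nat) (A : 'M[R]_(m, n)) (C : 'M[R]_n) :
  psdmx C -> psdmx (A *m C *m A^T).
Proof.
by move=> C_psd v; have := C_psd (v *m A); rewrite trmx_mul !mulmxA.
Qed.

Lemma eigenvalue_form (R : realFieldType) (m : nat) (S : 'M[R]_m) a : eigenvalue S a ->
  exists2 v : 'rV[R]_m, (v *m S *m v^T) 0 0 = a * \sum_j v 0 j ^+ 2 & 0 < \sum_j v 0 j ^+ 2.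
Proof.
move=> /eigenvalueP [v vS v_neq0]; exists v.
  rewrite vS -scalemxAl !mxE; congr (_ * _); apply: eq_bigr => j _.
  by rewrite mxE expr2.
rewrite lt_def sumr_ge0 ?andbT; last by move=> j _; exact: sqr_ge0.
apply: contra v_neq0 => /eqP v2_eq0; apply/eqP/rowP => j; rewrite mxE.
by apply/eqP; rewrite -sqrf_eq0; apply/eqP/(psumr_eq0P _ v2_eq0) => // k _; exact: sqr_ge0.
Qed.

Lemma psdmx_eigenvalue_ge0 (R : realFieldType) (m : nat) (S : 'M[R]_m) a :
  psdmx S -> eigenvalue S a -> 0 <= a.
Proof. by move=> S_psd /eigenvalue_form [v vS v_gt0]; have := S_psd v; rewrite vS pmulr_lge0. Qed.

Section EnsembleCovariance.
Variables (R : realType) (N n : nat) (u : 'I_N -> 'cV[R]_n).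

Lemma ens_cov_sym : (ens_cov u)^T = ens_cov u.
Proof.
apply/matrixP => i j; rewrite !mxE !summxE; congr (_ * _); apply: eq_bigr => k _.
by rewrite !mxE; apply: eq_bigr => l _; rewrite !mxE mulrC.
Qed.

Lemma ens_cov_psd : psdmx (ens_cov u).
Proof.
move=> v; rewrite /ens_cov -scalemxAr -scalemxAl mxE mulmx_sumr mulmx_suml summxE.
rewrite mulr_ge0 ?invr_ge0 ?ler0n // sumr_ge0 // => i _.
set z := u i - ens_mean u.
have -> : v *m (z *m z^T) *m v^T = (v *m z) *m (v *m z)^T by rewrite trmx_mul !mulmxA.
by rewrite mxE sumr_ge0 // => j _; rewrite [_^T _ _]mxE -expr2 sqr_ge0.
Qed.
End EnsembleCovariance.

Section SymmetricPsd.
Variables (R : realType) (m : nat) (S : 'M[R]_m).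
Hypotheses (S_sym : S^T = S) (S_psd : psdmx S).

Lemma sym_eigval_ge0 i : 0 <= sym_eigval S i.
Proof. exact: psdmx_eigenvalue_ge0 S_psd (sym_eigvalP S_sym i). Qed.

Let eigenvalue_le_sum a : eigenvalue S a -> a <= \sum_i sym_eigval S i.
Proof.
move=> /eigenvalue_form [v vS v_gt0].
have v2E : \sum_j v 0 j ^+ 2 = \sum_i sym_weight S v^T i.
  by rewrite sym_weight_sum; apply: eq_bigr => i _; rewrite mxE.
rewrite -(ler_pM2r v_gt0) -vS v2E mulr_sumr.
have := sym_form S_sym v^T; rewrite trmxK => ->.
apply: ler_sum => i _; rewrite mulrC ler_wpM2r ?sym_weight_ge0 //.
by rewrite (bigD1 i) //= lerDl sumr_ge0 // => j _; exact: sym_eigval_ge0.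
Qed.

Let eigenvalues_bounded : has_ubound [set a | eigenvalue S a].
Proof. by exists (\sum_i sym_eigval S i) => a; exact: eigenvalue_le_sum. Qed.

Lemma sym_eigval_le_lambda_max i : sym_eigval S i <= lambda_max S.
Proof. exact: (ub_le_sup eigenvalues_bounded) (sym_eigvalP S_sym i). Qed.

Let eigenvalues_ge0 : lbound [set a | eigenvalue S a] 0.
Proof. by move=> a; exact: psdmx_eigenvalue_ge0. Qed.

Lemma lambda_min_ge0 : 0 <= lambda_min S.
Proof.
rewrite /lambda_min; have [->|ne] := eqVneq [set a | eigenvalue S a] set0; first by rewrite inf0.
exact: lb_le_inf ((set0P _).1 ne) eigenvalues_ge0.
Qed.

Lemma lambda_min_le_sym_eigval i : lambda_min S <= sym_eigval S i.
Proof. exact: (ge_inf (ex_intro _ 0 eigenvalues_ge0)) (sym_eigvalP S_sym i). Qed.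
End SymmetricPsd.

Section ZetaDelta.
Variables (R : realType) (N m n : nat) (A : 'M[R]_(m, n)) (d : 'cV[R]_m) (mu : R).
Variables (u : 'I_N -> 'cV[R]_n) (k : nat) (q eps : R).
Hypotheses (mu_gt0 : 0 < mu) (k_ge1 : (1 <= k)%N) (q_gt0 : 0 < q) (eps_gt0 : 0 < eps).
Local Notation S := (A *m ens_cov u *m A^T).
Local Notation r := (ens_resid A d u).
Local Notation zeta := (zeta_delta A d mu u k q eps).
Local Notation delta := (delta_k A d mu u k q eps).
Local Notation F := (resolvent_sum (sym_weight S r) (sym_eigval S) mu).

Let S_sym : S^T = S.
Proof. by rewrite !trmx_mul trmxK ens_cov_sym mulmxA. Qed.

Let S_psd : psdmx S.
Proof. exact/psdmx_conj/ens_cov_psd. Qed.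

Let bound := lambda_max S ^+ 2 * norm2 r ^+ 4 / (mu + lambda_min S) ^+ 4.

Let bound_ge0 : 0 <= bound.
Proof.
have l_ge0 := lambda_min_ge0 S_psd.
apply: mulr_ge0; first by rewrite mulr_ge0 ?sqr_ge0 // exprn_ge0 // sqrtr_ge0.
by rewrite invr_ge0 exprn_ge0 // addr_ge0 // ltW.
Qed.

Lemma delta_kE : delta = 3 / (4 * q) * bound + eps * k%:R.
Proof. by rewrite /delta_k /bound !mulrA. Qed.

Lemma delta_k_gt0 : 0 < delta.
Proof.
rewrite delta_kE ltr_wpDl ?mulr_gt0 ?ltr0n // mulr_ge0 // divr_ge0 //.
by rewrite mulr_ge0 // ltW.
Qed.

Let denom_gt0 a i : 0 <= a -> 0 < mu + a * sym_eigval S i.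
Proof. by move=> a_ge0; rewrite ltr_pwDl // mulr_ge0 // sym_eigval_ge0. Qed.

Lemma zeta_deltaE a : 0 <= a -> zeta a = 1 + F 0 a * F 1 a / (4 * delta).
Proof.
move=> a_ge0; have denom_neq0 i : mu + a * sym_eigval S i != 0 by rewrite gt_eqF ?denom_gt0.
rewrite /zeta_delta /Mmat (sym_form_resolvent S_sym denom_neq0).
by rewrite (sym_form_resolvent_sandwich S_sym denom_neq0).
Qed.

Let F_ge0 p a : 0 <= a -> 0 <= F p a.
Proof.
exact: (resolvent_sum_ge0 mu_gt0 (sym_weight_ge0 S r) (lambda_min_ge0 S_psd)
  (lambda_min_le_sym_eigval S_sym S_psd) p).
Qed.

Lemma zeta_delta_ge1 a : 1 <= a -> 1 <= zeta a.
Proof.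
move=> a_ge1; have a_ge0 := le_trans ler01 a_ge1.
rewrite zeta_deltaE // lerDl divr_ge0 ?mulr_ge0 ?F_ge0 //.
by rewrite ltW // delta_k_gt0.
Qed.

Lemma norm2_resid_exp4 : norm2 r ^+ 4 = (\sum_i sym_weight S r i) ^+ 2.
Proof.
rewrite sym_weight_sum /norm2 -[4%N]/(2 * 2)%N exprM sqr_sqrtr //.
by apply: sumr_ge0 => i _; exact: sqr_ge0.
Qed.

Lemma is_derive_zeta_delta (a : R) : 1 <= a ->
  is_derive a 1 zeta (- (F 1 a ^+ 2 + 2 * (F 0 a * F 2 a)) / (4 * delta)).
Proof.
move=> a_ge1; have a_gt0 := lt_le_trans ltr01 a_ge1.
have denom_neq0 i : mu + a * sym_eigval S i != 0 by rewrite gt_eqF ?denom_gt0 ?ltW.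
apply: (@near_eq_is_derive _ _ _ (fun b => 1 + (4 * delta)^-1 *: (F 0 b * F 1 b))).
  near=> b; rewrite zeta_deltaE ?[_ / _]mulrC //; apply: ltW.
  by near: b; exact: lt_nbhsr.
have := is_deriveD (is_derive_cst (1 : R) a 1)
  (is_deriveZ (4 * delta)^-1 (is_derive_resolvent_product (sym_weight S r) denom_neq0)).
move/is_derive_eq; apply.
by rewrite add0r [RHS]mulrC.
Unshelve. all: by end_near.
Qed.

Let slope_le a : 1 <= a -> F 1 a ^+ 2 + 2 * (F 0 a * F 2 a) <= 3 * bound.
Proof.
move=> a_ge1; rewrite /bound norm2_resid_exp4.
exact: (resolvent_slope_le mu_gt0 (sym_weight_ge0 S r) (lambda_min_ge0 S_psd)
  (lambda_min_le_sym_eigval S_sym S_psd) (sym_eigval_le_lambda_max S_sym S_psd) a_ge1).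
Qed.

Lemma zeta_delta_contractive a : 1 <= a -> derivable zeta a 1 /\ `|zeta^`() a| <= q.
Proof.
move=> a_ge1; have [zeta_derivable zeta'E] := is_derive_zeta_delta a_ge1.
have a_ge0 := le_trans ler01 a_ge1.
have delta4_gt0 : 0 < 4 * delta by rewrite mulr_gt0 // delta_k_gt0.
have slope_ge0 : 0 <= F 1 a ^+ 2 + 2 * (F 0 a * F 2 a).
  by rewrite addr_ge0 ?sqr_ge0 // !mulr_ge0 ?F_ge0.
split => //; rewrite derive1E zeta'E normrM normrN (ger0_norm slope_ge0).
rewrite ger0_norm ?invr_ge0 ?(ltW delta4_gt0) // ler_pdivrMr //.
apply: le_trans (slope_le a_ge1) _.
have -> : q * (4 * delta) = 3 * bound + 4 * q * (eps * k%:R).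
  by rewrite delta_kE; field; rewrite gt_eqF.
by rewrite lerDl !mulr_ge0 // ltW.
Qed.
End ZetaDelta.

Theorem proposition4 (R : realType) (N m n : nat) (A : 'M[R]_(m, n))
  (d : 'cV[R]_m) (mu : R) (u : 'I_N -> 'cV[R]_n) (k : nat) (q eps : R) :
  (0 < N)%N -> 0 < mu -> (1 <= k)%N -> 0 < q -> q < 1 -> 0 < eps ->
  let zeta := zeta_delta A d mu u k q eps in
  (forall a : R, 1 <= a -> 1 <= zeta a) /\
  (forall a : R, 1 <= a -> derivable zeta a 1 /\ `|zeta^`() a| <= q) /\
  (exists a : R, [/\ 1 <= a, a = zeta a,
     (forall b : R, 1 <= b -> b = zeta b -> b = a) &
     (forall a0 : R, 1 <= a0 -> (fun p : nat => iter p zeta a0) @ \oo --> a)]).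
Proof.
move=> _ mu_gt0 k_ge1 q_gt0 q_lt1 eps_gt0 zeta.
have zeta_ge1 := zeta_delta_ge1 A d u mu_gt0 k_ge1 q_gt0 eps_gt0.
have zeta_contractive := zeta_delta_contractive A d u mu_gt0 k_ge1 q_gt0 eps_gt0.
split => //; split => //.
have [a a_ge1 a_fix] := halfline_fixpoint_exists q_lt1 zeta_ge1 zeta_contractive.
exists a; split => //.
  move=> b b_ge1.
  exact: (halfline_fixpoint_unique q_lt1 zeta_ge1 zeta_contractive a_ge1 a_fix b_ge1).
by move=> a0; exact: (halfline_iter_cvg q_lt1 zeta_ge1 zeta_contractive a_ge1 a_fix).
Qed.
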